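(* Let $k$ be a non-negative integer, $a_0,\dots,a_k\in\mathbb{C}$, and suppose $\Lambda=\sum_{i=0}^{k}a_i(Dx)^iD$ is a lowering operator. Let $\{B_n\}_{n\ge0}$ be a monic polynomial sequence with dual sequence $\{u_n\}_{n\ge0}$, let $$B^{[1]}_n(x;\Lambda)=(n+1)^{-1}\Big(\sum_{i=0}^{k}a_i(n+1)^i\Big)^{-1}(\Lambda B_{n+1})(x),\quad n\ge0,$$ and let $\{u^{[1]}_n(\Lambda)\}_{n\ge0}$ be the dual sequence of $\{B^{[1]}_n(\cdot;\Lambda)\}_{n\ge0}$. Then for all $n\ge0$, $${}^t\Lambda\big(u^{[1]}_n(\Lambda)\big)=\rho_nu_{n+1},\qquad \rho_n=(n+1)\sum_{i=0}^{k}a_i(n+1)^i,$$ where ${}^t\Lambda=\sum_{i=0}^{k}a_i(-1)^{i+1}(Dx)^iD$ acting on forms.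
   Context: $\mathcal{P}$ is the space of complex polynomials, $\mathcal{P}'$ its algebraic dual, $\langle u,p\rangle$ the action of a form on a polynomial. $D$ is the derivative, $x$ multiplication by $x$, products are compositions. A lowering operator is a linear map $\mathcal{O}:\mathcal{P}\to\mathcal{P}$ with $\mathcal{O}(1)=0$ and $\deg\mathcal{O}(x^n)=n-1$, $n\ge1$. A monic polynomial sequence (MPS) is a sequence $\{B_n\}_{n\ge0}$ with $B_n$ monic of degree $n$; its dual sequence is the unique $\{u_n\}\subset\mathcal{P}'$ with $\langle u_n,B_m\rangle=\delta_{n,m}$. Transposes: $\langle {}^tT u,p\rangle=\langle u,Tp\rangle$; on forms $\langle Du,p\rangle=-\langle u,p'\rangle$ and $\langle xu,p\rangle=\langle u,xp\rangle$. *)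

From HB Require Import structures.
From mathcomp Require Import all_boot all_order all_algebra.
From mathcomp Require Import complex.
From mathcomp Require Import reals.
Set Implicit Arguments. Unset Strict Implicit. Unset Printing Implicit Defensive.
Import Order.TTheory GRing.Theory Num.Theory ComplexField.
Local Open Scope ring_scope.

Section Defs.
Variable C : fieldType.

Definition is_form (u : {poly C} -> C) : Prop :=
  forall (c : C) (p q : {poly C}), u (c *: p + q) = c * u p + u q.

Definition Dx (p : {poly C}) : {poly C} := ('X * p)^`().

Definition Lam (k : nat) (a : 'I_k.+1 -> C) (p : {poly C}) : {poly C} :=
  \sum_(i < k.+1) a i *: iter i Dx (p^`()).

Definition lowering (O : {poly C} -> {poly C}) : Prop :=
  [/\ forall c (p q : {poly C}), O (c *: p + q) = c *: O p + O q,
      O 1 = 0 &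
      forall n : nat, (1 <= n)%N -> size (O 'X^n) = n].
(* size = degree + 1, so size (O x^n) = n  <->  deg O(x^n) = n-1 *)

Definition MPS (B : nat -> {poly C}) : Prop :=
  forall n, B n \is monic /\ size (B n) = n.+1.

Definition dual_seq (B : nat -> {poly C}) (u : nat -> {poly C} -> C) : Prop :=
  (forall n, is_form (u n)) /\ (forall n m, u n (B m) = (n == m)%:R).

Definition transp (T : {poly C} -> {poly C}) (u : {poly C} -> C) : {poly C} -> C :=
  fun p => u (T p).

Definition rho (k : nat) (a : 'I_k.+1 -> C) (n : nat) : C :=
  (n.+1)%:R * \sum_(i < k.+1) a i * (n.+1)%:R ^+ i.

Definition B1 (k : nat) (a : 'I_k.+1 -> C) (B : nat -> {poly C}) (n : nat) : {poly C} :=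
  (rho a n)^-1 *: Lam a (B n.+1).

End Defs.

From HB Require Import structures.
From mathcomp Require Import all_boot all_order all_algebra.
From mathcomp Require Import complex.
From mathcomp Require Import reals.
Set Implicit Arguments. Unset Strict Implicit. Unset Printing Implicit Defensive.
Import Order.TTheory GRing.Theory Num.Theory ComplexField.
Local Open Scope ring_scope.

(* A monic polynomial sequence is a basis of the polynomials, so a form is
   determined by its values on it.  Since [Lam (B (m+1))] is a multiple of
   [B1 m] and [Lam 1 = 0], both sides of the identity, viewed as forms, take
   the value [rho n * delta_{n,m}] on [B (m+1)] and vanish on [B 0]. *)

Section Forms.
Variable F : fieldType.
Implicit Types (p q : {poly F}) (v w : {poly F} -> F) (B : nat -> {poly F}).

Lemma form0 v : is_form v -> v 0 = 0.
Proof.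
move=> hv; have := hv 1 0 0; rewrite scaler0 addr0 mul1r => /eqP.
by rewrite -subr_eq subrr eq_sym => /eqP.
Qed.

Lemma formZ v c p : is_form v -> v (c *: p) = c * v p.
Proof. by move=> hv; rewrite -[c *: p]addr0 hv form0 // addr0. Qed.

Lemma is_form_scale c v : is_form v -> is_form (fun p => c * v p).
Proof. by move=> hv d p q; rewrite hv mulrDr mulrCA. Qed.

Lemma is_form_transp (T : {poly F} -> {poly F}) v :
  (forall c p q, T (c *: p + q) = c *: T p + T q) ->
  is_form v -> is_form (transp T v).
Proof. by move=> linT hv c p q; rewrite /transp linT hv. Qed.

Lemma size_sub_lead_monic_lt p q :
  q \is monic -> size q = size p -> p != 0 ->
  (size (p - lead_coef p *: q)%R < size p)%N.
Proof.
move=> mq sq p0; set r := p - _.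
have sr : (size r <= size p)%N.
  by rewrite (leq_trans (size_polyD _ _)) // size_polyN geq_max leqnn
             (leq_trans (size_scale_leq _ _)) ?sq.
have r_top : r`_(size p).-1 = 0.
  by rewrite coefB coefZ -sq -/(lead_coef q) (monicP mq) mulr1 sq subrr.
rewrite ltn_neqAle sr andbT; apply/eqP => er.
have r0 : r = 0 by apply/eqP; rewrite -lead_coef_eq0 /lead_coef er r_top.
by move: p0; rewrite -size_poly_eq0 -er r0 size_poly0.
Qed.

Lemma MPS_forms_eq B v w :
  MPS B -> is_form v -> is_form w -> (forall m, v (B m) = w (B m)) -> v =1 w.
Proof.
move=> hB hv hw vwB p; have [n] := ubnP (size p); elim: n p => // n IH p.
have [-> _|p0] := eqVneq p 0; first by rewrite !form0.
have [mB sB] := hB (size p).-1.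
rewrite ltnS => sp; set c := lead_coef p; set b := B (size p).-1.
have -> : p = c *: b + (p - c *: b) by rewrite addrC subrK.
rewrite hv hw vwB IH //.
apply: leq_trans sp; apply: size_sub_lead_monic_lt => //.
by rewrite sB prednK // size_poly_gt0.
Qed.

Lemma MPS0 B : MPS B -> B 0%N = 1.
Proof.
move=> hB; have [/monicP mB sB] := hB 0%N.
have c0 : (B 0%N)`_0 = 1 by rewrite -mB /lead_coef sB.
by rewrite (size1_polyC (eq_leq sB)) c0.
Qed.

Lemma dual_seq_neq0 B u n : dual_seq B u -> B n != 0.
Proof.
move=> [fu du]; apply/eqP => Bn0.
by have := du n n; rewrite Bn0 form0 // eqxx => /eqP; rewrite eq_sym oner_eq0.
Qed.

End Forms.

Lemma rho_neq0 (F : fieldType) k (a : 'I_k.+1 -> F) B u1 n :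
  dual_seq (B1 a B) u1 -> rho a n != 0.
Proof.
move=> /(dual_seq_neq0 n); apply: contraNneq => r0.
by rewrite /B1 r0 invr0 scale0r.
Qed.

Lemma Lam_B_succ (F : fieldType) k (a : 'I_k.+1 -> F) B n :
  rho a n != 0 -> Lam a (B n.+1) = rho a n *: B1 a B n.
Proof. by move=> r0; rewrite /B1 scalerA mulfV // scale1r. Qed.

Theorem proposition4 (R : realType) (k : nat) (a : 'I_k.+1 -> R[i])
  (B : nat -> {poly R[i]}) (u u1 : nat -> {poly R[i]} -> R[i]) :
  lowering (Lam a) ->
  MPS B ->
  dual_seq B u ->
  dual_seq (B1 a B) u1 ->
  forall (n : nat) (p : {poly R[i]}),
    transp (Lam a) (u1 n) p = rho a n * u n.+1 p.
Proof.
move=> [linL L1 _] hB [fu du] hu1 n.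
apply: (MPS_forms_eq hB).
- exact: is_form_transp linL (hu1.1 n).
- exact: is_form_scale (fu n.+1).
case=> [|m]; rewrite /transp.
  by rewrite {1}(MPS0 hB) L1 (form0 (hu1.1 n)) du mulr0.
rewrite (Lam_B_succ _ (rho_neq0 m hu1)) (formZ _ _ (hu1.1 n)) hu1.2 du eqSS.
by have [->|_] := eqVneq n m; last rewrite !mulr0.
Qed.
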